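(* Let $0<\lambda<1$, $0<\beta<1$. The nonzero proper ideals of $\mathcal{B}'(\lambda,\beta)$ are exactly the following: (i) if $\beta=\lambda\neq\tfrac12$: $\mathbb{R}c\subset\operatorname{span}\{b,c\}\subset\operatorname{span}\{a,b,c\}$; (ii) if $\beta=1-\lambda$, $\lambda\neq\tfrac12$: $\mathbb{R}c\subset\operatorname{span}\{a,c\}\subset\operatorname{span}\{a,b,c\}$; (iii) if $\beta\neq\lambda$ and $\beta\neq 1-\lambda$: $\mathbb{R}c\subset\operatorname{span}\{a,b,c\}$; (iv) if $\lambda=\beta=\tfrac12$: $\mathbb{R}c$, $\operatorname{span}\{a,c\}$, $\operatorname{span}\{b,c\}$, $\operatorname{span}\{a,b,c\}$ (with $\mathbb{R}c$ contained in both $2$-dimensional ideals, which are both contained in $\operatorname{span}\{a,b,c\}$).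
   Context: For real parameters $0<\lambda<1$ and $0<\beta<1$, $\mathcal{B}'(\lambda,\beta)$ denotes the commutative (non-associative) $4$-dimensional real algebra with basis $\{o,a,b,c\}$ whose bilinear commutative multiplication $\circ$ is determined by $o\circ o=o$, $o\circ a=\lambda a$, $o\circ b=\lambda b$, $a\circ a=a$, $b\circ b=b$, $a\circ b=\frac{\lambda-\beta}{\lambda}a+\frac{\lambda+\beta-1}{\lambda}b+c$, and $c\circ x=x\circ c=0$ for every $x$. (In the paper the basis vector $c$ is written $ab$.) An ideal is a linear subspace $I$ with $x\circ I\subseteq I$ for all $x$ in the algebra. *)

(* The algebra B'(lambda,beta) over a real field R is
   modelled on the row vectors 'rV[R]_4, with coordinates (o, a, b, c). *)
From HB Require Import structures.
From mathcomp Require Import all_boot all_order all_algebra.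
Set Implicit Arguments. Unset Strict Implicit. Unset Printing Implicit Defensive.
Import Order.TTheory GRing.Theory Num.Theory.
Local Open Scope ring_scope.

Section Bprime.
Variable R : realFieldType.

Definition bvec (k : nat) : 'rV[R]_4 := delta_mx 0 (inord k).
Definition vo := bvec 0.
Definition va := bvec 1.
Definition vb := bvec 2.
Definition vc := bvec 3.

Definition bmul (l be : R) (i j : nat) : 'rV[R]_4 :=
  match i, j with
  | 0, 0 => vo
  | 0, 1 | 1, 0 => l *: va
  | 0, 2 | 2, 0 => l *: vb
  | 1, 1 => va
  | 2, 2 => vb
  | 1, 2 | 2, 1 => ((l - be) / l) *: va + ((l + be - 1) / l) *: vb + vc
  | _, _ => 0
  end.

Definition Bmul (l be : R) (x y : 'rV[R]_4) : 'rV[R]_4 :=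
  \sum_(i < 4) \sum_(j < 4) (x 0 i * y 0 j) *: bmul l be i j.

Definition is_ideal (l be : R) (I : {vspace 'rV[R]_4}) : Prop :=
  forall x y, y \in I -> Bmul l be x y \in I.

Definition nonzero_proper_ideal (l be : R) (I : {vspace 'rV[R]_4}) : Prop :=
  [/\ is_ideal l be I, I != 0%VS & I != fullv].

End Bprime.

(* Write y = y_o o + y_a a + y_b b + y_c c and x ** y for the product.  If an
   ideal contains y with y_o <> 0, it contains o ** (o ** y) - l (o ** y), a nonzero
   multiple of o, and o generates the algebra; so a proper ideal I lies in
   span{a, b, c}.  There o ** y = l (y_a a + y_b b), so the a,b-part and then the
   c-part of each y in I are in I, while a ** y and b ** y have c-coordinates y_b
   and y_a: a nonzero I contains c.  Since a ** b = ((l - be) a + (l + be - 1) b)/l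
   + c, a in I forces b in I unless be = 1 - l, and b in I forces a in I unless
   be = l; an element with y_a, y_b both nonzero puts both a and b in I.  Hence I
   is one of the four candidates, each an ideal exactly under its condition. *)
From HB Require Import structures.
From mathcomp Require Import all_boot all_order all_algebra.
From mathcomp Require Import ring lra.
Set Implicit Arguments. Unset Strict Implicit. Unset Printing Implicit Defensive.
Import Order.TTheory GRing.Theory Num.Theory.
Local Open Scope ring_scope.

Section Coordinates.
Variable R : realFieldType.

Notation o := (vo R). Notation a := (va R). Notation b := (vb R). Notation c := (vc R).

Definition coef (x : 'rV[R]_4) (i : nat) : R := x 0 (inord i).

Lemma coef_bvec i j : (i < 4)%N -> (j < 4)%N -> coef (bvec R j) i = (i == j)%:R.
Proof. by move=> hi hj; rewrite /coef /bvec mxE /= -val_eqE /= !inordK. Qed.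

Lemma coefD x y i : coef (x + y) i = coef x i + coef y i. Proof. by rewrite /coef mxE. Qed.
Lemma coefB x y i : coef (x - y) i = coef x i - coef y i. Proof. by rewrite /coef !mxE. Qed.
Lemma coefN x i : coef (- x) i = - coef x i. Proof. by rewrite /coef mxE. Qed.
Lemma coefZ k x i : coef (k *: x) i = k * coef x i. Proof. by rewrite /coef mxE. Qed.
Lemma coef0 i : coef 0 i = 0. Proof. by rewrite /coef mxE. Qed.

Lemma coef_inj x y : (forall i, (i < 4)%N -> coef x i = coef y i) -> x = y.
Proof.
by move=> H; apply/rowP => k; have := H k (ltn_ord k); rewrite /coef inord_val.
Qed.

Lemma big_ord4 (V : zmodType) (F : 'I_4 -> V) :
  \sum_(i < 4) F i = F (inord 0) + F (inord 1) + F (inord 2) + F (inord 3).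
Proof.
rewrite !big_ord_recl big_ord0 addr0 !addrA.
by congr (F _ + F _ + F _ + F _); apply: val_inj; rewrite /= inordK.
Qed.

Ltac coef_simpl := rewrite ?(coefD, coefB, coefN, coefZ, coef0) /vo /va /vb /vc
                           ?coef_bvec //=.
Ltac coef_ext := apply: coef_inj => -[|[|[|[|i]]]] // _.

Lemma row4E y : y = coef y 0 *: o + coef y 1 *: a + coef y 2 *: b + coef y 3 *: c.
Proof. by coef_ext; coef_simpl; ring. Qed.

Lemma coef_span_eq0 (X : seq 'rV[R]_4) k y :
  all (fun v => coef v k == 0) X -> y \in <<X>>%VS -> coef y k = 0.
Proof.
move=> X0 /(@coord_span _ _ _ (in_tuple X)) ->.
rewrite /coef summxE big1 // => i _; rewrite mxE.
by have /eqP := allP X0 _ (mem_nth 0 (ltn_ord i)); rewrite /coef => ->; rewrite mulr0.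
Qed.

Lemma memv_span_abc y : (y \in <<[:: a; b; c]>>%VS) = (coef y 0 == 0).
Proof.
apply/idP/eqP => [yI|y0].
  by apply: (coef_span_eq0 _ yI); rewrite /= !coef_bvec //= !eqxx.
rewrite (row4E y) y0 scale0r add0r.
by rewrite !memvD ?memvZ // memv_span // !inE eqxx ?orbT.
Qed.

Lemma memv_span_ac y : (y \in <<[:: a; c]>>%VS) = (coef y 0 == 0) && (coef y 2 == 0).
Proof.
apply/idP/andP => [yI|[/eqP y0 /eqP y2]].
  by split; apply/eqP; apply: (coef_span_eq0 _ yI); rewrite /= !coef_bvec //= !eqxx.
rewrite (row4E y) y0 y2 !scale0r add0r addr0.
by rewrite !memvD ?memvZ // memv_span // !inE eqxx ?orbT.
Qed.

Lemma memv_span_bc y : (y \in <<[:: b; c]>>%VS) = (coef y 0 == 0) && (coef y 1 == 0).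
Proof.
apply/idP/andP => [yI|[/eqP y0 /eqP y1]].
  by split; apply/eqP; apply: (coef_span_eq0 _ yI); rewrite /= !coef_bvec //= !eqxx.
rewrite (row4E y) y0 y1 !scale0r !add0r.
by rewrite !memvD ?memvZ // memv_span // !inE eqxx ?orbT.
Qed.

Lemma memv_line_c y : (y \in <[c]>%VS) = [&& coef y 0 == 0, coef y 1 == 0 & coef y 2 == 0].
Proof.
apply/idP/and3P => [|[/eqP y0 /eqP y1 /eqP y2]].
  by case/vlineP=> k ->; rewrite !coefZ /vc !coef_bvec // !mulr0.
by rewrite (row4E y) y0 y1 y2 !scale0r !add0r memvZ // memv_line.
Qed.

Variables l be : R.
Local Notation "x ** y" := (Bmul l be x y) (at level 40, left associativity) : ring_scope.

Lemma coef_Bmul x y :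
  [/\ coef (x ** y) 0 = coef x 0 * coef y 0,
      coef (x ** y) 1 = l * (coef x 0 * coef y 1 + coef x 1 * coef y 0)
        + coef x 1 * coef y 1 + (l - be) / l * (coef x 1 * coef y 2 + coef x 2 * coef y 1),
      coef (x ** y) 2 = l * (coef x 0 * coef y 2 + coef x 2 * coef y 0)
        + coef x 2 * coef y 2 + (l + be - 1) / l * (coef x 1 * coef y 2 + coef x 2 * coef y 1)
    & coef (x ** y) 3 = coef x 1 * coef y 2 + coef x 2 * coef y 1].
Proof.
rewrite /Bmul /coef !summxE !big_ord4 !inordK //= /vo /va /vb /vc /bvec.
by rewrite !mxE /= -!val_eqE /= !inordK //=; split; ring.
Qed.

Lemma coef0_Bmul x y : coef (x ** y) 0 = coef x 0 * coef y 0.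
Proof. by case: (coef_Bmul x y). Qed.
Lemma coef1_Bmul x y : coef (x ** y) 1 = l * (coef x 0 * coef y 1 + coef x 1 * coef y 0)
  + coef x 1 * coef y 1 + (l - be) / l * (coef x 1 * coef y 2 + coef x 2 * coef y 1).
Proof. by case: (coef_Bmul x y). Qed.
Lemma coef2_Bmul x y : coef (x ** y) 2 = l * (coef x 0 * coef y 2 + coef x 2 * coef y 0)
  + coef x 2 * coef y 2 + (l + be - 1) / l * (coef x 1 * coef y 2 + coef x 2 * coef y 1).
Proof. by case: (coef_Bmul x y). Qed.
Lemma coef3_Bmul x y : coef (x ** y) 3 = coef x 1 * coef y 2 + coef x 2 * coef y 1.
Proof. by case: (coef_Bmul x y). Qed.

Ltac coefM_simpl :=
  rewrite ?(coefD, coefB, coefN, coefZ, coef0, coef0_Bmul, coef1_Bmul, coef2_Bmul, coef3_Bmul);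
  coef_simpl.

Hypotheses (l_neq0 : l != 0) (l_neq1 : l != 1).

Let l_sub1_neq0 : l - 1 != 0. Proof. by rewrite subr_eq0. Qed.
Let sub1l_neq0 : 1 - l != 0. Proof. by rewrite subr_eq0 eq_sym. Qed.

Ltac coef_field := field; rewrite ?l_neq0 ?l_sub1_neq0 ?sub1l_neq0 //.

Section ProperIdeal.
Variable I : {vspace 'rV[R]_4}.
Hypotheses (I_ideal : is_ideal l be I) (I_neq0 : I != 0%VS) (I_proper : I != fullv).

Lemma ideal_full_of_o : o \in I -> I = fullv.
Proof.
move=> oI.
have aI : a \in I.
  have -> : a = l^-1 *: (a ** o) by coef_ext; coefM_simpl; coef_field.
  by rewrite memvZ // I_ideal.
have bI : b \in I.
  have -> : b = l^-1 *: (b ** o) by coef_ext; coefM_simpl; coef_field.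
  by rewrite memvZ // I_ideal.
have cI : c \in I.
  have -> : c = a ** b - ((l - be) / l) *: a - ((l + be - 1) / l) *: b.
    by coef_ext; coefM_simpl; coef_field.
  by rewrite !memvB ?memvZ // I_ideal.
apply/vspaceP => x; rewrite memvf (row4E x).
by rewrite !memvD ?memvZ.
Qed.

Lemma ideal_coef0 y : y \in I -> coef y 0 = 0.
Proof.
move=> yI; apply/eqP; apply: contraR I_proper => y0; apply/eqP/ideal_full_of_o.
have -> : o = (coef y 0 * (1 - l))^-1 *: (o ** (o ** y) - l *: (o ** y)).
  by coef_ext; coefM_simpl; coef_field; rewrite y0.
by rewrite memvZ // memvB ?memvZ // !I_ideal.
Qed.

Lemma ideal_ab_part y : y \in I -> coef y 1 *: a + coef y 2 *: b \in I.
Proof.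
move=> yI; have -> : coef y 1 *: a + coef y 2 *: b = l^-1 *: (o ** y).
  by coef_ext; coefM_simpl; rewrite ?(ideal_coef0 yI); coef_field.
by rewrite memvZ // I_ideal.
Qed.

Lemma ideal_c_of_coef3 y : y \in I -> coef y 3 != 0 -> c \in I.
Proof.
move=> yI y3; have -> : c = (coef y 3)^-1 *: (y - (coef y 1 *: a + coef y 2 *: b)).
  by coef_ext; coefM_simpl; rewrite ?(ideal_coef0 yI); coef_field.
by rewrite memvZ // memvB // ideal_ab_part.
Qed.

Lemma ideal_c : c \in I.
Proof.
have yI := memv_pick I; set y := vpick I in yI.
have y_neq0 : y != 0 by rewrite vpick0.
have [y3|] := eqVneq (coef y 3) 0; last exact: ideal_c_of_coef3.
have [y1|y1] := eqVneq (coef y 1) 0; last first.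
  apply: (@ideal_c_of_coef3 (b ** y)); rewrite ?I_ideal //.
  by coefM_simpl; rewrite mul0r mul1r add0r.
have [y2|y2] := eqVneq (coef y 2) 0; last first.
  apply: (@ideal_c_of_coef3 (a ** y)); rewrite ?I_ideal //.
  by coefM_simpl; rewrite y1 mul1r mul0r addr0.
by case/eqP: y_neq0; coef_ext; coefM_simpl; rewrite ?(ideal_coef0 yI).
Qed.

Lemma ideal_b_of_a : be != 1 - l -> a \in I -> b \in I.
Proof.
move=> be_neq aI.
have lbe1_neq0 : l + be - 1 != 0 by apply: contra be_neq => /eqP h; apply/eqP; lra.
have -> : b = ((l + be - 1) / l)^-1 *: (b ** a - ((l - be) / l) *: a - c).
  by coef_ext; coefM_simpl; coef_field; rewrite lbe1_neq0.
by rewrite memvZ // !memvB ?memvZ ?I_ideal ?ideal_c.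
Qed.

Lemma ideal_a_of_b : be != l -> b \in I -> a \in I.
Proof.
move=> be_neq bI.
have lbe_neq0 : l - be != 0 by rewrite subr_eq0 eq_sym.
have -> : a = ((l - be) / l)^-1 *: (a ** b - ((l + be - 1) / l) *: b - c).
  by coef_ext; coefM_simpl; coef_field; rewrite lbe_neq0.
by rewrite memvZ // !memvB ?memvZ ?I_ideal ?ideal_c.
Qed.

(* Removing the a,b-part and the c-part from a ** y and b ** y leaves two vectors
   of span{a, b} whose determinant is a nonzero multiple of (l - 1) y_a y_b. *)
Lemma ideal_ab_of_coef12 y : y \in I -> coef y 1 != 0 -> coef y 2 != 0 -> a \in I /\ b \in I.
Proof.
move=> yI y1 y2; set u := coef y 1 *: a + coef y 2 *: b.
have uI : u \in I by apply: ideal_ab_part.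
have aI : a ** y - u - coef y 2 *: c \in I by rewrite !memvB ?memvZ ?I_ideal ?ideal_c.
have bI : b ** y - u - coef y 1 *: c \in I by rewrite !memvB ?memvZ ?I_ideal ?ideal_c.
split.
  have -> : a = (l / (l - 1)) *: (((l + be - 1) / l / coef y 2) *: (a ** y - u - coef y 2 *: c)
      - ((l + be - 1) / l - 1) / coef y 1 *: (b ** y - u - coef y 1 *: c)).
    by rewrite /u; coef_ext; coefM_simpl; rewrite ?(ideal_coef0 yI); coef_field; rewrite ?y1 ?y2.
  by rewrite memvZ // memvB ?memvZ.
have -> : b = (l / (l - 1)) *: (((l - be) / l / coef y 1) *: (b ** y - u - coef y 1 *: c)
    - ((l - be) / l - 1) / coef y 2 *: (a ** y - u - coef y 2 *: c)).
  by rewrite /u; coef_ext; coefM_simpl; rewrite ?(ideal_coef0 yI); coef_field; rewrite ?y1 ?y2.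
by rewrite memvZ // memvB ?memvZ.
Qed.

Lemma ideal_a_of_coef1 y : y \in I -> coef y 1 != 0 -> a \in I.
Proof.
move=> yI y1; have [y2|y2] := eqVneq (coef y 2) 0; last by case: (ideal_ab_of_coef12 yI y1 y2).
have := memvZ (coef y 1)^-1 (ideal_ab_part yI).
by rewrite y2 scale0r addr0 scalerA mulVf // scale1r.
Qed.

Lemma ideal_b_of_coef2 y : y \in I -> coef y 2 != 0 -> b \in I.
Proof.
move=> yI y2; have [y1|y1] := eqVneq (coef y 1) 0; last by case: (ideal_ab_of_coef12 yI y1 y2).
have := memvZ (coef y 2)^-1 (ideal_ab_part yI).
by rewrite y1 scale0r add0r scalerA mulVf // scale1r.
Qed.

Lemma proper_ideal_cases :
  [\/ I = <[c]>%VS, I = <<[:: a; c]>>%VS /\ be = 1 - l,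
      I = <<[:: b; c]>>%VS /\ be = l | I = <<[:: a; b; c]>>%VS].
Proof.
have cI := ideal_c.
have a_coef1 y : a \notin I -> y \in I -> coef y 1 == 0.
  by move=> aI yI; apply: contraNT aI; apply: ideal_a_of_coef1.
have b_coef2 y : b \notin I -> y \in I -> coef y 2 == 0.
  by move=> bI yI; apply: contraNT bI; apply: ideal_b_of_coef2.
have [aI|aI] := boolP (a \in I); have [bI|bI] := boolP (b \in I).
- apply: Or44; apply/eqP; rewrite eqEsubv; apply/andP; split.
    by apply/subvP => y yI; rewrite memv_span_abc ideal_coef0.
  by apply/span_subvP => v; rewrite !inE => /or3P[] /eqP ->.
- apply: Or42; split; last by apply/eqP; apply: contraNT bI => /ideal_b_of_a; apply.
  apply/eqP; rewrite eqEsubv; apply/andP; split.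
    by apply/subvP => y yI; rewrite memv_span_ac ideal_coef0 // b_coef2 // eqxx.
  by apply/span_subvP => v; rewrite !inE => /orP[] /eqP ->.
- apply: Or43; split; last by apply/eqP; apply: contraNT aI => /ideal_a_of_b; apply.
  apply/eqP; rewrite eqEsubv; apply/andP; split.
    by apply/subvP => y yI; rewrite memv_span_bc ideal_coef0 // a_coef1 // eqxx.
  by apply/span_subvP => v; rewrite !inE => /orP[] /eqP ->.
- apply: Or41; apply/eqP; rewrite eqEsubv; apply/andP; split.
    by apply/subvP => y yI; rewrite memv_line_c ideal_coef0 // a_coef1 // b_coef2 // eqxx.
  by rewrite -span_seq1; apply/span_subvP => v; rewrite !inE => /eqP ->.
Qed.

End ProperIdeal.

Lemma ideal_line_c : is_ideal l be <[c]>%VS.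
Proof.
move=> x y; rewrite !memv_line_c coef0_Bmul coef1_Bmul coef2_Bmul.
by case/and3P=> /eqP-> /eqP-> /eqP->; apply/and3P; split; apply/eqP; ring.
Qed.

Lemma ideal_span_abc : is_ideal l be <<[:: a; b; c]>>%VS.
Proof. by move=> x y; rewrite !memv_span_abc coef0_Bmul => /eqP->; rewrite mulr0. Qed.

Lemma ideal_span_ac : be = 1 - l -> is_ideal l be <<[:: a; c]>>%VS.
Proof.
move=> hbe x y; rewrite !memv_span_ac coef0_Bmul coef2_Bmul hbe.
by case/andP=> /eqP-> /eqP->; apply/andP; split; apply/eqP; ring.
Qed.

Lemma ideal_span_bc : be = l -> is_ideal l be <<[:: b; c]>>%VS.
Proof.
move=> hbe x y; rewrite !memv_span_bc coef0_Bmul coef1_Bmul hbe.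
by case/andP=> /eqP-> /eqP->; apply/andP; split; apply/eqP; ring.
Qed.

Lemma nonzero_proper_ideal_of (X : {vspace 'rV[R]_4}) :
  is_ideal l be X -> c \in X -> (X <= <<[:: a; b; c]>>)%VS -> nonzero_proper_ideal l be X.
Proof.
move=> X_ideal cX X_abc; split=> //; apply/eqP=> X_triv.
  move: cX; rewrite X_triv memv0 => /eqP/(congr1 (coef^~ 3))/eqP.
  by rewrite coef0 coef_bvec //= oner_eq0.
by have := subvP X_abc o; rewrite X_triv memvf memv_span_abc coef_bvec //= oner_eq0 => /(_ isT).
Qed.

Lemma nonzero_proper_idealP (I : {vspace 'rV[R]_4}) :
  nonzero_proper_ideal l be I <->
  [\/ I = <[c]>%VS, I = <<[:: a; c]>>%VS /\ be = 1 - l,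
      I = <<[:: b; c]>>%VS /\ be = l | I = <<[:: a; b; c]>>%VS].
Proof.
split=> [[]|]; first exact: proper_ideal_cases.
case=> [->|[-> /ideal_span_ac I_ideal]|[-> /ideal_span_bc I_ideal]|->];
  apply: nonzero_proper_ideal_of; rewrite ?memv_line ?memv_span ?inE ?eqxx ?orbT //.
- exact: ideal_line_c.
- by apply/subvP => y; rewrite memv_line_c memv_span_abc => /and3P[].
- by apply/subvP => y; rewrite memv_span_ac memv_span_abc => /andP[].
- by apply/subvP => y; rewrite memv_span_bc memv_span_abc => /andP[].
- exact: ideal_span_abc.
Qed.

End Coordinates.

Theorem mainTheorem7 (R : realFieldType) (l be : R) :
  0 < l < 1 -> 0 < be < 1 ->
  [/\ (be = l -> l != 2^-1 ->
         forall I : {vspace 'rV[R]_4}, nonzero_proper_ideal l be I <->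
           [\/ I = <[vc R]>%VS, I = <<[:: vb R; vc R]>>%VS
             | I = <<[:: va R; vb R; vc R]>>%VS]),
      (be = 1 - l -> l != 2^-1 ->
         forall I : {vspace 'rV[R]_4}, nonzero_proper_ideal l be I <->
           [\/ I = <[vc R]>%VS, I = <<[:: va R; vc R]>>%VS
             | I = <<[:: va R; vb R; vc R]>>%VS]),
      (be != l -> be != 1 - l ->
         forall I : {vspace 'rV[R]_4}, nonzero_proper_ideal l be I <->
           (I = <[vc R]>%VS \/ I = <<[:: va R; vb R; vc R]>>%VS))
    & (l = 2^-1 -> be = 2^-1 ->
         forall I : {vspace 'rV[R]_4}, nonzero_proper_ideal l be I <->
           [\/ I = <[vc R]>%VS, I = <<[:: va R; vc R]>>%VS,
               I = <<[:: vb R; vc R]>>%VS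
             | I = <<[:: va R; vb R; vc R]>>%VS])].
Proof.
move=> /andP[l_gt0 l_lt1] _.
have idealP := nonzero_proper_idealP be (lt0r_neq0 l_gt0) (negbT (lt_eqF l_lt1)).
split=> [be_l l_neq_half | be_1l l_neq_half | /eqP be_neq_l /eqP be_neq_1l | l_half be_half] I;
  rewrite idealP.
- have be_neq_1l : be <> 1 - l by move=> be_1l; move/eqP: l_neq_half; apply; lra.
  split=> [[->|[_ /be_neq_1l]|[-> _]|->]|[->|->|->]]; by constructor.
- have be_neq_l : be <> l by move=> be_l; move/eqP: l_neq_half; apply; lra.
  split=> [[->|[-> _]|[_ /be_neq_l]|->]|[->|->|->]]; by constructor.
- split=> [[->|[_ /be_neq_1l]|[_ /be_neq_l]|->]|[->|->]]; by constructor.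
- have [be_l be_1l] : be = l /\ be = 1 - l by split; lra.
  split=> [[->|[-> _]|[-> _]|->]|[->|->|->|->]]; by constructor.
Qed.
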